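(* For $k\geq1$ (resp. $k\geq2$), the $3$-valent $(2k,0)$-cluster $\triangle(2k)$ has eigenvalue $4$ (resp. $2$) as a $D_3$-invariant eigenvalue, with multiplicity (as $D_3$-invariant eigenvalue) at least $\lceil k/2\rceil$ (resp. $\lfloor k/2\rfloor$); that is, the space of $D_3$-invariant functions $u$ on $V(\triangle(2k))$ with $\Delta_{\triangle(2k)}u=4u$ (resp. $=2u$) has dimension at least $\lceil k/2\rceil$ (resp. $\lfloor k/2\rfloor$).
   Context: With $\omega=e^{\pi i/3}$, the $3$-valent $(m,0)$-cluster $\triangle(m)$ is the graph whose vertices are the barycenters of the $m^2$ unit triangles of the triangular lattice $\mathbb{Z}[\omega]$ contained in the triangle with vertices $0,m,m\omega$, two being adjacent when the triangles share an edge. Its Laplacian eigen-equation is considered with the Neumann-type convention $(\Delta_{\triangle(m)}u)(x)=3u(x)-\sum_{y\sim x}u(y)-(3-\deg(x))u(x)$, i.e. $(\Delta_{\triangle(m)}u)(x)=\deg_{\triangle(m)}(x)u(x)-\sum_{y\sim x}u(y)$. The dihedral group $D_3$ of symmetries of the triangle acts on $V(\triangle(m))$; a function $u$ is $D_3$-invariant if $u(\sigma x)=u(x)$ for all $\sigma\in D_3$ and all $x$. *)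

From HB Require Import structures.
From mathcomp Require Import all_boot all_order all_algebra perm.
Set Implicit Arguments. Unset Strict Implicit. Unset Printing Implicit Defensive.
Import Order.TTheory GRing.Theory Num.Theory.

(* Encoding of the unit triangles of the lattice Z[w] inside the triangle with
   vertices 0, m, m w.  A point z = a + b w of the big triangle has the three
   "distances to the sides" (a, b, m - a - b) (barycentric coordinates scaled
   by m).  A unit triangle is determined by the integer parts (x_0,x_1,x_2) of
   these coordinates at its interior points:
     - upward triangle with vertices a+bw, a+1+bw, a+(b+1)w  <->  (a, b, m-1-a-b),
       coordinate sum m-1;
     - downward triangle with vertices a+1+bw, a+(b+1)w, a+1+(b+1)w
       <->  (a, b, m-2-a-b), coordinate sum m-2.
   Two unit triangles share an edge iff one is upward, x, and the other is
   x - e_i for some i.  The dihedral group D_3 of symmetries of the big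
   triangle acts by permuting the three coordinates (full S_3 action). *)

Definition tri_pred (m : nat) : pred {ffun 'I_3 -> 'I_m} :=
  fun x => ((\sum_i (x i : nat)).+1 == m) || ((\sum_i (x i : nat)).+2 == m).

Notation tri_vert m := {x : {ffun 'I_3 -> 'I_m} | @tri_pred m x}.

Definition tri_adj0 (m : nat) (x y : {ffun 'I_3 -> 'I_m}) : bool :=
  [exists i : 'I_3, [forall j : 'I_3, (x j : nat) == (y j + (i == j))%N]].

Definition tri_adj (m : nat) (x y : tri_vert m) : bool :=
  tri_adj0 (val x) (val y) || tri_adj0 (val y) (val x).

Definition tri_deg (m : nat) (x : tri_vert m) : nat := #|[pred y | tri_adj x y]|.

Definition tri_lap (R : numFieldType) (m : nat) (u : tri_vert m -> R)
    (x : tri_vert m) : R :=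
  ((tri_deg x)%:R * u x - \sum_(y : tri_vert m | tri_adj x y) u y)%R.

Definition D3_invariant (R : Type) (m : nat) (u : tri_vert m -> R) : Prop :=
  forall (s : {perm 'I_3}) (x y : tri_vert m),
    (forall i, val y i = val x (s i)) -> u y = u x.

Definition D3_eig_dim_ge (R : numFieldType) (m : nat) (lam : R) (d : nat) : Prop :=
  exists u : 'I_d -> tri_vert m -> R,
    (forall i, D3_invariant (u i) /\ forall x, tri_lap (u i) x = (lam * u i x)%R)
    /\ (forall c : 'I_d -> R,
          (forall x, (\sum_(i < d) c i * u i x)%R = 0%R) -> forall i, c i = 0%R).

(* Given a profile W : Z -> R supported on odd integers, with
   W (-1) = 0 and W (m - t) = s W t for a sign s = +-1, put
     phi_up (a, b, c) = sum over ordered pairs i <> l of W x_i (-1)^(x_l)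
   on upward triangles and minus s times the sum of phi_up over the three
   neighbours on downward ones.  The equation at a downward triangle is then
   just s^2 = 1; at an interior upward triangle it holds because (-1)^t
   alternates, so that the six upward triangles at distance two contribute
   -2 phi_up.  At the boundary, extending the same formula to the ghost
   triangle with a coordinate -1 gives the value of the boundary triangle
   itself (this is where the parity and reflection of W enter), which is the
   Neumann condition.  The function is symmetric in (a, b, c), hence
   D_3-invariant, and has eigenvalue 3 + s.  Taking W = 1_j + s 1_(2k-j) for
   the odd j <= k (resp. j < k) gives the eigenvalue 4 (resp. 2); these are
   independent since phi = 2 W j' on the boundary triangle (0, j', 2k-1-j'). *)

From HB Require Import structures.
From mathcomp Require Import all_boot all_order all_algebra perm.
From mathcomp Require Import zify ring.
Set Implicit Arguments. Unset Strict Implicit. Unset Printing Implicit Defensive.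
Import Order.TTheory GRing.Theory Num.Theory.
Local Open Scope ring_scope.

Lemma ord3P (i : 'I_3) : [\/ i = 0, i = 1 | i = 2].
Proof.
by case: i => [[|[|[|//]]] ?]; [constructor 1|constructor 2|constructor 3]; apply: val_inj.
Qed.

Lemma big_ord3 (T : Type) (idx : T) (op : Monoid.law idx) (F : 'I_3 -> T) :
  \big[op/idx]_i F i = op (op (F 0) (F 1)) (F 2).
Proof.
rewrite !big_ord_recl big_ord0 Monoid.mulm1 Monoid.mulmA.
by congr (op (op _ (F _)) (F _)); apply: val_inj.
Qed.

Lemma perm3_sym (T U : Type) (g : T -> T -> T -> U) (sigma : {perm 'I_3}) (x : 'I_3 -> T) :
  (forall a b c, g b a c = g a b c) -> (forall a b c, g b c a = g a b c) ->
  g (x (sigma 0)) (x (sigma 1)) (x (sigma 2)) = g (x 0) (x 1) (x 2).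
Proof.
move=> gC gR.
have : [/\ sigma 0 != sigma 1, sigma 0 != sigma 2 & sigma 1 != sigma 2].
  by rewrite !(inj_eq perm_inj).
case: (ord3P (sigma 0)) (ord3P (sigma 1)) (ord3P (sigma 2)) => -> [] -> [] -> [] //= _ _ _.
all: first [ done | by rewrite gC | by rewrite gR | by rewrite 2!gR
           | by rewrite gR gC | by rewrite gC gR ].
Qed.

Section Sign.
Variable R : comUnitRingType.

Definition sign (t : int) : R := (-1) ^ t.

Lemma signD1 t : sign (t + 1) = - sign t.
Proof. by rewrite /sign exprzDr ?unitrN1 // expr1z mulrN1. Qed.

Lemma signB1 t : sign (t - 1) = - sign t.
Proof. by rewrite -[in RHS](subrK 1 t) signD1 opprK. Qed.

Lemma sign0 : sign 0 = 1.
Proof. exact: expr0z. Qed.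

Lemma signN1 : sign (-1) = -1.
Proof. by rewrite -sub0r signB1 sign0. Qed.

Lemma sign_double n : sign (2 * n) = 1.
Proof.
have sqrN1 : (-1 : R) ^ 2 = 1 by rewrite -[RHS](expr1n _ 2) -(sqrrN 1).
by rewrite /sign -exprz_exp sqrN1 exp1rz.
Qed.

Lemma sign_double1 n : sign (2 * n + 1) = -1.
Proof. by rewrite signD1 sign_double. Qed.

Lemma int_parity (t : int) : exists n, t = 2 * n \/ t = 2 * n + 1.
Proof. by exists (t %/ 2)%Z; lia. Qed.

End Sign.

Section Eigenfunction.
Variables (R : comUnitRingType) (m : int) (s : R) (W : int -> R).
Hypotheses (s_sq : s ^+ 2 = 1) (W_even : forall n, W (2 * n) = 0) (W_Nm1 : W (-1) = 0)
  (W_refl : forall t, W (m - t) = s * W t).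

Local Notation sign := (@sign R).

Definition phi_up (a b c : int) : R :=
  W a * (sign b + sign c) + W b * (sign c + sign a) + W c * (sign a + sign b).

Definition phi (a b c : int) : R :=
  if a + b + c == m - 1 then phi_up a b c
  else - s * (phi_up (a + 1) b c + phi_up a (b + 1) c + phi_up a b (c + 1)).

Lemma phiC a b c : phi b a c = phi a b c.
Proof. by rewrite /phi /phi_up (addrC b a); case: ifP => _; ring. Qed.

Lemma phiR a b c : phi b c a = phi a b c.
Proof. by rewrite /phi /phi_up [b + c + a]addrC addrA; case: ifP => _; ring. Qed.

Lemma phi_upE a b c : a + b + c = m - 1 -> phi a b c = phi_up a b c.
Proof. by rewrite /phi => ->; rewrite eqxx. Qed.

Lemma phi_dnE a b c : a + b + c = m - 2 ->
  phi a b c = - s * (phi_up (a + 1) b c + phi_up a (b + 1) c + phi_up a b (c + 1)).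
Proof. by rewrite /phi => ->; case: eqP => //; lia. Qed.

Lemma W0 : W 0 = 0.
Proof. by rewrite -(mulr0 2) W_even. Qed.

Lemma W_sign t : W t * sign t = - W t.
Proof.
have [n [->|->]] := int_parity t; first by rewrite W_even mul0r oppr0.
by rewrite sign_double1 mulrN1.
Qed.

Lemma W_sign_compl b c : b + c = m - 1 -> W b * sign c = W b.
Proof.
move=> bc; have -> : b = m - (c + 1) by lia.
rewrite W_refl -mulrA; congr (s * _).
by apply: oppr_inj; rewrite -mulrN -signD1 W_sign.
Qed.

Lemma phi_up_boundary b c : b + c = m - 1 -> phi_up 0 b c = 2 * (W b + W c).
Proof.
move=> bc; have cb : c + b = m - 1 by rewrite addrC.
rewrite /phi_up W0 sign0 !mulrDr mulr1 (W_sign_compl bc) (W_sign_compl cb).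
ring.
Qed.

(* (-1, b, c) is the mirror image of the boundary triangle (0, b, c) across
   the side a = 0 of the cluster. *)
Lemma phi_reflect b c : b + c = m - 1 -> phi (-1) b c = phi 0 b c.
Proof.
move=> bc; rewrite (@phi_upE 0) ?add0r // (@phi_dnE (-1)); last by lia.
have Wb1 : W (b + 1) = s * W c by rewrite -W_refl; congr W; lia.
have Wc1 : W (c + 1) = s * W b by rewrite -W_refl; congr W; lia.
have ghost : phi_up 0 b c + phi_up (-1) (b + 1) c + phi_up (-1) b (c + 1)
    = s * (W c * sign c - W c) + s * (W b * sign b - W b).
  rewrite /phi_up W0 W_Nm1 sign0 signN1 !signD1 Wb1 Wc1.
  ring.
rewrite addNr ghost !W_sign phi_up_boundary //.
by rewrite -[RHS]mul1r -[X in _ = X * _]s_sq; ring.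
Qed.

Lemma phi_boundary b c : b + c = m - 1 -> phi 0 b c = 2 * (W b + W c).
Proof. by move=> bc; rewrite phi_upE ?add0r // phi_up_boundary. Qed.

Lemma phi_edge a b c : 0 <= a -> a + b + c = m - 1 ->
  (phi a b c - phi (a - 1) b c) *+ (0 < a)%R = phi a b c - phi (a - 1) b c.
Proof.
rewrite le_eqVlt => /orP[/eqP <- abc|->] //.
by rewrite sub0r phi_reflect ?subrr // -abc add0r.
Qed.

Lemma phi_down_nbrs a b c : a + b + c = m - 1 ->
  phi (a - 1) b c + phi a (b - 1) c + phi a b (c - 1) = - s * phi a b c.
Proof.
move=> abc; rewrite (phi_upE abc) !phi_dnE; try lia.
(* sign alternates, so the six second neighbours sum to -2 phi_up a b c *)
rewrite !subrK /phi_up !signD1 !signB1; ring.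
Qed.

Lemma phi_eigen_up a b c : 0 <= a -> 0 <= b -> 0 <= c -> a + b + c = m - 1 ->
  (phi a b c - phi (a - 1) b c) *+ (0 < a)%R + (phi a b c - phi a (b - 1) c) *+ (0 < b)%R
    + (phi a b c - phi a b (c - 1)) *+ (0 < c)%R = (3 + s) * phi a b c.
Proof.
move=> a0 b0 c0 abc.
have edge_b : (phi a b c - phi a (b - 1) c) *+ (0 < b)%R = phi a b c - phi a (b - 1) c.
  by rewrite (phiC b a c) (phiC (b - 1) a c) phi_edge // -abc; lia.
have edge_c : (phi a b c - phi a b (c - 1)) *+ (0 < c)%R = phi a b c - phi a b (c - 1).
  by rewrite (phiR c a b) (phiR (c - 1) a b) phi_edge // -abc; lia.
have nbr_a : phi (a - 1) b c = - s * phi a b c - phi a (b - 1) c - phi a b (c - 1).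
  by rewrite -phi_down_nbrs //; ring.
by rewrite phi_edge // edge_b edge_c nbr_a; ring.
Qed.

Lemma phi_up_nbrs a b c : a + b + c = m - 2 ->
  phi (a + 1) b c + phi a (b + 1) c + phi a b (c + 1) = - s * phi a b c.
Proof.
move=> abc; rewrite (phi_dnE abc) !phi_upE; try lia.
by rewrite mulrA mulrNN -expr2 s_sq mul1r.
Qed.

Lemma phi_eigen_dn a b c : a + b + c = m - 2 ->
  (phi a b c - phi (a + 1) b c) + (phi a b c - phi a (b + 1) c) + (phi a b c - phi a b (c + 1))
    = (3 + s) * phi a b c.
Proof.
move=> abc; have nbr_a : phi (a + 1) b c = - s * phi a b c - phi a (b + 1) c - phi a b (c + 1).
  by rewrite -phi_up_nbrs //; ring.
by rewrite nbr_a; ring.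
Qed.

End Eigenfunction.

Section TriangleGraph.
Variable m : nat.
Local Notation FF := {ffun 'I_3 -> 'I_m}.
Local Notation V := (tri_vert m).

Lemma sum_tri_vert (M : nmodType) (P : pred FF) (F : FF -> M) :
  \sum_(y : V | P (val y)) F (val y) = \sum_(p | tri_pred p && P p) F p.
Proof. by rewrite (big_sub_cond (@tri_pred m)). Qed.

Definition tri_sum (p : FF) : nat := \sum_i (p i : nat).

Definition dn_nbr (p : FF) (i : 'I_3) : FF := [ffun j => insubd (p j) (p j - (i == j))%N].
Definition up_nbr (p : FF) (i : 'I_3) : FF := [ffun j => insubd (p j) (p j + (i == j))%N].

Lemma dn_nbrE (p : FF) i j : (dn_nbr p i j : nat) = (p j - (i == j))%N.
Proof. by rewrite ffunE val_insubd (leq_ltn_trans (leq_subr _ _)). Qed.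

Lemma up_nbrE (p : FF) i j : (p j + (i == j) < m)%N -> (up_nbr p i j : nat) = (p j + (i == j))%N.
Proof. by move=> lt_m; rewrite ffunE val_insubd lt_m. Qed.

Lemma tri_adj0P (p q : FF) :
  reflect (exists i, forall j, (p j : nat) = (q j + (i == j))%N) (tri_adj0 p q).
Proof.
apply: (iffP existsP) => [[i /forallP pq]|[i pq]]; exists i.
  by move=> j; apply/eqP/pq.
by apply/forallP => j; apply/eqP.
Qed.

Lemma tri_sum_succ (p q : FF) i :
  (forall j, (p j : nat) = (q j + (i == j))%N) -> tri_sum p = (tri_sum q).+1.
Proof.
move=> pq; rewrite /tri_sum (eq_bigr _ (fun j _ => pq j)) big_split /=.
rewrite [X in (_ + X)%N](bigD1 i) //=.
rewrite eqxx [X in (true + X)%N]big1 ?addn0 ?addn1 // => j; by rewrite eq_sym => /negPf ->.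
Qed.

Lemma sum_nbr_up (M : nmodType) (x : V) (F : FF -> M) : (tri_sum (val x)).+1 = m ->
  \sum_(y : V | tri_adj x y) F (val y) = \sum_(i | (0 < val x i)%N) F (dn_nbr (val x) i).
Proof.
move=> x_up; rewrite (sum_tri_vert (fun p => tri_adj0 (val x) p || tri_adj0 p (val x))).
rewrite -(big_imset _ (h := dn_nbr (val x)) (A := [pred i | 0 < val x i]%N)); last first.
  move=> i i' /= x_i _ /ffunP/(_ i)/(congr1 (@nat_of_ord _)); rewrite !dn_nbrE eqxx.
  by case: eqP => // _; move: x_i; rewrite inE /=; lia.
apply: eq_bigl => p; apply/andP/imsetP
  => [[p_tri /orP[/tri_adj0P[i xp]|/tri_adj0P[i px]]]|[i x_i ->]].
- exists i; first by rewrite inE /= xp eqxx; lia.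
  by apply/ffunP => j; apply: val_inj; rewrite /= dn_nbrE xp addnK.
- by move: p_tri; rewrite /tri_pred -/(tri_sum p) (tri_sum_succ px) => /orP[] /eqP ?; exfalso; lia.
- have x_dn : forall j, (val x j : nat) = (dn_nbr (val x) i j + (i == j))%N.
    by move=> j; rewrite dn_nbrE; case: eqP => [<-|_]; rewrite ?subn0 ?addn0 // subnK.
  split; last by apply/orP; left; apply/tri_adj0P; exists i.
  rewrite /tri_pred -/(tri_sum _); move: x_up; rewrite (tri_sum_succ x_dn) => x_up.
  by apply/orP; right; apply/eqP.
Qed.

Lemma tri_coord_le_sum (p : FF) j : (p j <= tri_sum p)%N.
Proof. by rewrite /tri_sum (bigD1 j) //= leq_addr. Qed.

Lemma sum_nbr_dn (M : nmodType) (x : V) (F : FF -> M) : (tri_sum (val x)).+2 = m ->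
  \sum_(y : V | tri_adj x y) F (val y) = \sum_i F (up_nbr (val x) i).
Proof.
move=> x_dn; have x_up_nbr i j : (up_nbr (val x) i j : nat) = (val x j + (i == j))%N.
  by rewrite up_nbrE //; have := tri_coord_le_sum (val x) j; case: (i == j); lia.
rewrite (sum_tri_vert (fun p => tri_adj0 (val x) p || tri_adj0 p (val x))).
rewrite -(big_imset _ (h := up_nbr (val x)) (A := predT)); last first.
  move=> i i' _ _ /ffunP/(_ i)/(congr1 (@nat_of_ord _)); rewrite !x_up_nbr eqxx.
  by case: eqP => // _; lia.
apply: eq_bigl => p; apply/andP/imsetP
  => [[p_tri /orP[/tri_adj0P[i xp]|/tri_adj0P[i px]]]|[i _ ->]].
- by move: p_tri; rewrite /tri_pred -/(tri_sum p) => /orP[] /eqP ?; exfalso;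
    move: x_dn; rewrite (tri_sum_succ xp); lia.
- by exists i => //; apply/ffunP => j; apply: val_inj; rewrite /= x_up_nbr px.
- split; last by apply/orP; right; apply/tri_adj0P; exists i.
  by rewrite /tri_pred -/(tri_sum _) (tri_sum_succ (x_up_nbr i)) x_dn eqxx.
Qed.

Lemma tri_sumE (p : FF) : tri_sum p = (p 0%R + p 1%R + p 2%R)%N.
Proof. exact: big_ord3. Qed.

Definition tri_fun (T : Type) (g : int -> int -> int -> T) (p : FF) : T :=
  g (p 0 : nat) (p 1 : nat) (p 2 : nat).

Lemma tri_vert_of_coords (a b c : nat) : (a + b + c).+1 = m ->
  exists x : V, forall (T : Type) (g : int -> int -> int -> T), tri_fun g (val x) = g a b c.
Proof.
move=> abc; have m_gt0 : (0 < m)%N by rewrite -abc.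
pose p : FF := [ffun i : 'I_3 => insubd (Ordinal m_gt0) (nth 0%N [:: a; b; c] i)].
have pE (i : 'I_3) : (p i : nat) = nth 0%N [:: a; b; c] i.
  by rewrite ffunE val_insubd; case: ifP => // /negP[]; case: (ord3P i) => -> /=; lia.
have p_tri : tri_pred p by rewrite /tri_pred -/(tri_sum p) tri_sumE !pE /= abc eqxx.
by exists (exist _ p p_tri) => T g; rewrite /tri_fun /= !pE.
Qed.

Lemma tri_fun_D3_invariant (T : Type) (g : int -> int -> int -> T) :
  (forall a b c, g b a c = g a b c) -> (forall a b c, g b c a = g a b c) ->
  D3_invariant (fun x : V => tri_fun g (val x)).
Proof.
move=> gC gR sigma x y xy; rewrite /tri_fun !xy.
exact: (perm3_sym sigma (fun i => (val x i : nat)%:Z) gC gR).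
Qed.

Lemma tri_fun_dn_nbr (T : Type) (g : int -> int -> int -> T) (p : FF) i : (0 < p i)%N ->
  tri_fun g (dn_nbr p i) =
    g ((p 0 : nat)%:Z - (i == 0)%:Z) ((p 1 : nat)%:Z - (i == 1)%:Z) ((p 2 : nat)%:Z - (i == 2)%:Z).
Proof.
move=> p_i; have le_p j : ((i == j) <= p j)%N by case: eqP => [<-|].
by rewrite /tri_fun !dn_nbrE !subzn.
Qed.

Lemma tri_fun_up_nbr (T : Type) (g : int -> int -> int -> T) (p : FF) i :
  (tri_sum p).+2 = m ->
  tri_fun g (up_nbr p i) =
    g ((p 0 : nat)%:Z + (i == 0)%:Z) ((p 1 : nat)%:Z + (i == 1)%:Z) ((p 2 : nat)%:Z + (i == 2)%:Z).
Proof.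
move=> p_dn; have lt_m j : (p j + (i == j) < m)%N.
  by have := tri_coord_le_sum p j; case: (i == j); lia.
by rewrite /tri_fun !up_nbrE.
Qed.

Section Laplacian.
Variable R : numFieldType.

Lemma tri_lap_up (u : FF -> R) (x : V) : (tri_sum (val x)).+1 = m ->
  tri_lap (fun y => u (val y)) x = \sum_(i | (0 < val x i)%N) (u (val x) - u (dn_nbr (val x) i)).
Proof.
move=> x_up; rewrite /tri_lap /tri_deg -sum1_card natr_sum.
rewrite (sum_nbr_up (fun=> 1) x_up) (sum_nbr_up u x_up) mulr_suml -sumrB.
by under eq_bigr do rewrite mul1r.
Qed.

Lemma tri_lap_dn (u : FF -> R) (x : V) : (tri_sum (val x)).+2 = m ->
  tri_lap (fun y => u (val y)) x = \sum_i (u (val x) - u (up_nbr (val x) i)).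
Proof.
move=> x_dn; rewrite /tri_lap /tri_deg -sum1_card natr_sum.
rewrite (sum_nbr_dn (fun=> 1) x_dn) (sum_nbr_dn u x_dn) mulr_suml -sumrB.
by under eq_bigr do rewrite mul1r.
Qed.

End Laplacian.

End TriangleGraph.

Section ClusterEigenfunction.
Variables (R : numFieldType) (m : nat) (s : R) (W : int -> R).
Hypotheses (s_sq : s ^+ 2 = 1) (W_even : forall n, W (2 * n) = 0) (W_Nm1 : W (-1) = 0)
  (W_refl : forall t, W (m%:Z - t) = s * W t).

Local Notation u := (fun x : tri_vert m => tri_fun (phi m s W) (val x)).

Lemma tri_phi_D3_invariant : D3_invariant u.
Proof. exact: tri_fun_D3_invariant (@phiC _ _ _ _) (@phiR _ _ _ _). Qed.

Lemma tri_phi_eigen x : tri_lap u x = (3 + s) * u x.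
Proof.
case/orP: (valP x) => /eqP; rewrite -/(tri_sum _) => x_tri;
  have := x_tri; rewrite tri_sumE /= => sum_x.
- rewrite tri_lap_up //; under eq_bigr => i x_i do rewrite tri_fun_dn_nbr //.
  rewrite big_mkcond big_ord3 /= -!mulrb ?subr0.
  by apply: phi_eigen_up => //; lia.
- rewrite tri_lap_dn //; under eq_bigr => i _ do rewrite tri_fun_up_nbr //.
  rewrite big_ord3 /= ?addr0.
  by apply: phi_eigen_dn => //; lia.
Qed.

End ClusterEigenfunction.

Lemma lin_indep_of_isolating_points (T : Type) (R : idomainType) (d : nat) (u : 'I_d -> T -> R) :
  (forall i, exists x, u i x != 0 /\ forall j, j != i -> u j x = 0) ->
  forall c : 'I_d -> R, (forall x, \sum_(i < d) c i * u i x = 0) -> forall i, c i = 0.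
Proof.
move=> isolated c sum0 i; have [x [ui_x uj_x]] := isolated i.
move: (sum0 x); rewrite (bigD1 i) //= big1 ?addr0 => [/eqP|j ji]; last by rewrite uj_x ?mulr0.
by rewrite mulf_eq0 (negPf ui_x) orbF => /eqP.
Qed.

Section Profiles.
Variables (R : numFieldType) (k : nat) (s : R).
Hypothesis s_sq : s ^+ 2 = 1.

Definition profile (j t : int) : R := (t == j)%:R + s * (t == (2 * k)%N%:Z - j)%:R.

Lemma profile_refl j t : profile j ((2 * k)%N%:Z - t) = s * profile j t.
Proof.
rewrite /profile.
have -> : ((2 * k)%N%:Z - t == j) = (t == (2 * k)%N%:Z - j) by apply/eqP/eqP; lia.
have -> : ((2 * k)%N%:Z - t == (2 * k)%N%:Z - j) = (t == j) by apply/eqP/eqP; lia.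
by rewrite mulrDr mulrA -expr2 s_sq mul1r addrC.
Qed.

Lemma profile_even (q : nat) n : profile (2 * q%:Z + 1) (2 * n) = 0.
Proof. by rewrite /profile !(introF eqP) ?mulr0 ?addr0 //; lia. Qed.

Lemma profile_Nm1 (q : nat) : (2 * q < 2 * k)%N -> profile (2 * q%:Z + 1) (-1) = 0.
Proof. by move=> q_lt; rewrite /profile !(introF eqP) ?mulr0 ?addr0 //; lia. Qed.

Lemma profile_off (q q' : nat) : q != q' -> (2 * q < k)%N -> (2 * q' < k)%N ->
  profile (2 * q%:Z + 1) (2 * q'%:Z + 1) = 0.
Proof.
by move=> /eqP qq' q_lt q'_lt; rewrite /profile !(introF eqP) ?mulr0 ?addr0 //; lia.
Qed.

Definition cluster_eigvec (q : nat) (x : tri_vert (2 * k)) : R :=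
  tri_fun (phi (2 * k)%N s (profile (2 * q%:Z + 1))) (val x).

Lemma D3_eig_dim_ge_profiles (d : nat) :
  (forall q : 'I_d, 2 * q < k)%N ->
  (forall q : 'I_d, profile (2 * q%:Z + 1) (2 * q%:Z + 1) != 0) ->
  D3_eig_dim_ge (2 * k) (3 + s) d.
Proof.
move=> q_lt diag; exists (fun q => cluster_eigvec q); split.
  move=> q; have q_lt2 : (2 * q < 2 * k)%N by have := q_lt q; lia.
  split; first exact: tri_phi_D3_invariant.
  exact: tri_phi_eigen s_sq (@profile_even _) (profile_Nm1 q_lt2) (@profile_refl _).
apply: lin_indep_of_isolating_points => q; have q_k := q_lt q.
have [x xE] := @tri_vert_of_coords (2 * k) 0 (2 * q + 1) (2 * k - 2 * q - 2) ltac:(lia).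
have eigvec_x j : cluster_eigvec j x = 2 * profile (2 * j%:Z + 1) (2 * q%:Z + 1).
  rewrite /cluster_eigvec xE.
  have -> : ((2 * q + 1)%N : int) = 2 * q%:Z + 1 by lia.
  have -> : ((2 * k - 2 * q - 2)%N : int) = 2 * (k%:Z - q%:Z - 1) by lia.
  by rewrite (phi_boundary (@profile_even _) (@profile_refl _)) ?profile_even ?addr0 //; lia.
exists x; rewrite eigvec_x mulf_neq0 ?pnatr_eq0 ?diag //; split=> // j jq.
by rewrite eigvec_x profile_off ?mulr0.
Qed.

End Profiles.

Theorem lemma5p1 (R : realFieldType) (k : nat) :
  ((1 <= k)%N -> D3_eig_dim_ge (R:=R) (2 * k) (4%:R)%R (k.+1)./2) /\
  ((2 <= k)%N -> D3_eig_dim_ge (R:=R) (2 * k) (2%:R)%R k./2).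
Proof.
(* the bounds on k only exclude the cases where the dimension bound is 0 *)
split=> _.
- have -> : 4%:R = 3 + 1 :> R by ring.
  apply: D3_eig_dim_ge_profiles => [|q|q]; first exact: expr1n.
    by have := ltn_ord q; rewrite gtn_half_double -muln2; lia.
  by rewrite /profile eqxx mul1r -natrD pnatr_eq0.
- have -> : 2%:R = 3 + -1 :> R by ring.
  apply: D3_eig_dim_ge_profiles => [|q|q]; first by rewrite sqrrN expr1n.
    by have := ltn_ord q; rewrite gtn_half_double -muln2; lia.
  rewrite /profile eqxx (_ : (2 * q%:Z + 1 == _) = false) ?mulr0 ?addr0 ?oner_neq0 //.
  by apply/eqP; have := ltn_ord q; rewrite gtn_half_double -muln2; lia.
Qed.
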